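(* Let $(X,\mathrm{d})$ be a metric space, $P\subseteq X$ finite with $n$ points, $r,\varepsilon>0$, and let $\mathcal{F}$ be an $(r_0,r,r(1+\varepsilon),p_0,p_1,p_2)$-sensitive family of hash functions on $X$ for some $r_0\le r$; let $\varrho=\ln p_1/\ln p_2$. For any query point $q\in X$, during the query procedure of the structure $\mathcal{A}(P,r,\varepsilon)$ (described in the context), the expected total number of collisions of $q$ with points of $N_P(q,r(1+\varepsilon))\setminus\mathcal{B}(q,r_0)$ is $\tilde O\!\left(\frac{n^\alpha}{p_1}\,|N_P(q,r(1+\varepsilon))\setminus\mathcal{B}(q,r_0)|\right)$, where $\alpha=\varrho\left(1-\frac{\ln p_0}{\ln p_1}\right)\le\varrho$.
   Context: $\mathcal{B}(x,R)$ is the closed ball of center $x$ and radius $R$; $N_P(x,R)$ is the set of points of $P\setminus\{x\}$ lying in $\mathcal{B}(x,R)$. A family $\mathcal{F}$ of functions $X\to\mathbb{Z}$ with a probability distribution is $(r_0,r_1,r_2,p_0,p_1,p_2)$-sensitive ($r_0\le r_1<r_2$, $1>p_0\ge p_1>p_2>0$) if for all $x,y\in X$: $\mathrm{d}(x,y)\le r_1\Rightarrow \Pr[f(x)=f(y)]\ge p_1$; $\mathrm{d}(x,y)\ge r_2\Rightarrow \Pr[f(x)=f(y)]\le p_2$; $\mathrm{d}(x,y)\ge r_0\Rightarrow \Pr[f(x)=f(y)]\le p_0$. Structure $\mathcal{A}(P,r,\varepsilon)$: let $k=\lceil \ln n/\ln(1/p_2)\rceil$, $L=\lceil n^\varrho/p_1\rceil$,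 and let $\mathcal{G}$ be the family of maps $g=(f_1,\dots,f_k):X\to\mathbb{Z}^k$ with coordinates drawn independently from $\mathcal{F}$. For each of $\lceil c\ln n\rceil$ rounds ($c>0$ a fixed constant), independently draw $g_1,\dots,g_L$ from $\mathcal{G}$ and insert every $p\in P$ into hash table $H_j$ under key $g_j(p)$. Query: for every round and every $j$, retrieve all points stored in $H_j$ under key $g_j(q)$. A collision of $q$ with $p$ is an occurrence of $p$ among the retrieved points of some table in some round, counted over all tables and rounds. $\tilde O$ hides factors polylogarithmic in $n$ (with $c$ constant). *)

From mathcomp Require Import all_boot all_order all_algebra finmap.
From mathcomp Require Import all_classical all_reals all_analysis.

Set Implicit Arguments.
Unset Strict Implicit.
Unset Printing Implicit Defensive.

Import Order.TTheory GRing.Theory Num.Theory.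
Local Open Scope classical_set_scope.
Local Open Scope ring_scope.

Definition is_metric (R : realType) (X : Type) (d : X -> X -> R) : Prop :=
  [/\ forall x y, 0 <= d x y,
      forall x y, d x y = 0 <-> x = y,
      forall x y, d x y = d y x &
      forall x y z, d x z <= d x y + d y z].

Definition cyl (X : Type) (s : seq (X * int)) : set (X -> int) :=
  [set f | foldr (fun xz (Q : Prop) => f xz.1 = xz.2 /\ Q) True s].

(* A random function X -> Z on (Omega, measurable) : the events
   {w | h w \in C}, C a cylinder set (these generate the product
   sigma-algebra on Z^X), are measurable. *)
Definition random_hash (d : measure_display) (Omega : measurableType d)
  (X : Type) (h : Omega -> X -> int) : Prop :=
  forall s : seq (X * int), measurable (h @^-1` cyl s).

Definition pr_coll (d : measure_display) (Omega : measurableType d)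
  (R : realType) (P : probability Omega R) (X : Type)
  (h : Omega -> X -> int) (x y : X) : \bar R :=
  P [set w | h w x = h w y].

Definition sensitive (R : realType) (X : Type) (dist : X -> X -> R)
  (dF : measure_display) (OmegaF : measurableType dF)
  (PF : probability OmegaF R) (hash : OmegaF -> X -> int)
  (r0 r1 r2 p0 p1 p2 : R) : Prop :=
  [/\ r0 <= r1 /\ r1 < r2, (p0 < 1 /\ p1 <= p0 /\ p2 < p1 /\ 0 < p2),
      (forall x y, dist x y <= r1 -> (p1%:E <= pr_coll PF hash x y)%E),
      (forall x y, r2 <= dist x y -> (pr_coll PF hash x y <= p2%:E)%E) &
      (forall x y, r0 <= dist x y -> (pr_coll PF hash x y <= p0%:E)%E)].

(* The random function h (on (Omega, P)) is distributed as F (hash under PF):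
   equal laws on the product sigma-algebra of Z^X, i.e. equal
   probabilities of every cylinder event. *)
Definition same_law (R : realType) (X : Type)
  (d : measure_display) (Omega : measurableType d) (P : probability Omega R)
  (h : Omega -> X -> int)
  (dF : measure_display) (OmegaF : measurableType dF)
  (PF : probability OmegaF R) (hash : OmegaF -> X -> int) : Prop :=
  forall s : seq (X * int), P (h @^-1` cyl s) = PF (hash @^-1` cyl s).

(* Mutual independence of the random functions (h i)_{i in I}: product rule
   for every finite subfamily J and every choice of cylinder events (these
   form a pi-system generating each sigma(h i)). *)
Definition mutually_independent (R : realType) (X : Type)
  (d : measure_display) (Omega : measurableType d) (P : probability Omega R)
  (I : finType) (h : I -> Omega -> X -> int) : Prop :=
  forall (J : {set I}) (s : I -> seq (X * int)),
    P (\big[setI/setT]_(i in J) (h i @^-1` cyl (s i)))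
    = (\prod_(i in J) fine (P (h i @^-1` cyl (s i))))%:E.

(* ceiling of a real, as a natural number (used for nonnegative arguments) *)
Definition ceil_nat (R : realType) (x : R) : nat := `|Num.ceil x|%N.

(* Parameters of the structure A(P, r, eps), with n = |P|. *)
Definition k_param (R : realType) (n : nat) (p2 : R) : nat :=
  ceil_nat (ln (n%:R : R) / ln (1 / p2)).
Definition rho (R : realType) (p1 p2 : R) : R := ln p1 / ln p2.
Definition L_param (R : realType) (n : nat) (p1 p2 : R) : nat :=
  ceil_nat ((n%:R : R) `^ (rho p1 p2) / p1).
Definition rounds (R : realType) (c : R) (n : nat) : nat :=
  ceil_nat (c * ln (n%:R : R)).

(* N_P(q, rr) \ B(q, r0): points p of P \ {q} with r0 < d(q,p) <= rr. *)
Definition annulus (R : realType) (X : choiceType) (dist : X -> X -> R)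
  (P : {fset X}) (q : X) (r0 rr : R) : {fset X} :=
  [fset p in P | [&& p != q, dist q p <= rr & ~~ (dist q p <= r0)]]%fset.

(* Index of a hash function of the structure: (round, table j, coordinate). *)
Definition hindex (Rn Ln k : nat) : finType := ('I_Rn * 'I_Ln * 'I_k)%type.

(* Number of collisions of q with points of S, given all drawn coordinate
   functions h (t, j, i): over every round t and table j, the points p of S
   stored in H_j under key g_j(q), i.e. with g_j(p) = g_j(q). *)
Definition collisions (X : choiceType) (Rn Ln k : nat)
  (h : hindex Rn Ln k -> X -> int) (S : {fset X}) (q : X) : nat :=
  \sum_(t < Rn) \sum_(j < Ln) \sum_(p <- S)
     [forall i : 'I_k, h (t, j, i) p == h (t, j, i) q].

From mathcomp Require Import all_boot all_order all_algebra finmap.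
From mathcomp Require Import all_classical all_reals all_analysis.
From mathcomp Require Import ring lra zify measurable_realfun.

Import Order.TTheory GRing.Theory Num.Theory.
Local Open Scope classical_set_scope.
Local Open Scope ring_scope.

(* The number of collisions is a sum, over rounds t, tables j and points p
   of the annulus, of the indicator that the k independent copies of F
   indexing table (t, j) all collide on q and p; since d(q, p) >= r0, each
   copy collides with probability at most p0, so each indicator has
   expectation at most p0^k <= n^(-ln p0 / ln p2).  Multiplying by the
   c ln n rounds and the n^rho / p1 tables gives n^alpha / p1 up to a
   logarithmic factor, since alpha = rho - ln p0 / ln p2. *)

Lemma in_bigsetI {T : Type} (I : finType) (K : {set I}) (F : I -> set T) w :
  (\big[setI/setT]_(i in K) F i) w <-> forall i, i \in K -> F i w.
Proof.
rewrite -bigcap_seq_cond; split=> [FK i iK | FK i /andP[_ iK]]; last exact: FK.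
by apply: FK; rewrite /= mem_index_enum.
Qed.

Section CollisionEvents.
Context {Omega X : Type}.
Variables (g : Omega -> X -> int) (x y : X).

Definition coll_event : set Omega := [set w | g w x = g w y].

Definition coll_at (v : int) : set Omega := g @^-1` cyl [:: (x, v); (y, v)].

(* Unlike [coll_event], a finite union of cylinder events, hence directly
   amenable to the product rule of [mutually_independent]. *)
Definition coll_upto (N : nat) : set Omega :=
  \big[setU/set0]_(z < N.*2.+1) coll_at (z%:Z - N%:Z).

Lemma coll_atE v : coll_at v = [set w | g w x = v /\ g w y = v].
Proof. by apply/seteqP; split=> w /= => [[gx [gy _]] | [gx gy]]. Qed.

Lemma coll_uptoE N :
  coll_upto N = [set w | g w x = g w y /\ (`|g w x| <= N)%N].
Proof.
rewrite /coll_upto -(bigcup_mkord _ (fun z => coll_at (z%:Z - N%:Z))).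
apply/seteqP; split=> w /=.
- by case=> z /= zN; rewrite coll_atE => -[-> ->]; split=> //; lia.
- case=> gxy gxN; exists (absz (g w x + N%:Z)); first by rewrite /=; lia.
  by rewrite coll_atE /=; lia.
Qed.

Lemma coll_upto_sub N : coll_upto N `<=` coll_event.
Proof. by rewrite coll_uptoE => w []. Qed.

Lemma coll_upto_homo : {homo coll_upto : N M / (N <= M)%N >-> N `<=` M}.
Proof.
by move=> N M NM; rewrite !coll_uptoE => w [gxy gxN]; split=> //; lia.
Qed.

Lemma coll_event_bigcup : coll_event = \bigcup_N coll_upto N.
Proof.
apply/seteqP; split=> [w gxy | w [N _]]; last exact: coll_upto_sub.
by exists (absz (g w x)) => //; rewrite coll_uptoE.
Qed.

Lemma trivIset_coll_at N :
  trivIset [set: 'I_N.*2.+1] (fun z => coll_at (z%:Z - N%:Z)).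
Proof.
move=> z z' _ _ [w []]; rewrite !coll_atE => -[gx _] [gx' _].
by apply: val_inj => /=; move: gx gx'; lia.
Qed.

End CollisionEvents.

Section MeasurableCollisions.
Context {d : measure_display} {Omega : measurableType d} {X : Type}.
Variables (g : Omega -> X -> int) (x y : X).
Hypothesis g_random : random_hash g.

Lemma measurable_coll_at v : measurable (coll_at g x y v).
Proof. exact: g_random. Qed.

Lemma measurable_coll_upto N : measurable (coll_upto g x y N).
Proof. by apply: bigsetU_measurable => z _; exact: measurable_coll_at. Qed.

Lemma measurable_coll_event : measurable (coll_event g x y).
Proof.
rewrite coll_event_bigcup; apply: bigcup_measurable => N _.
exact: measurable_coll_upto.
Qed.

Lemma measure_coll_upto (R : realType) (mu : {measure set Omega -> \bar R}) N :
  mu (coll_upto g x y N) = \sum_(z < N.*2.+1) mu (coll_at g x y (z%:Z - N%:Z)).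
Proof.
apply: measure_bigsetU_ord; last exact: trivIset_coll_at.
by move=> z; exact: measurable_coll_at.
Qed.

End MeasurableCollisions.

Section Independence.
Context {R : realType} {d : measure_display} {Omega : measurableType d}
  {X : Type} {I : finType}.
Variables (Pr : probability Omega R) (h : I -> Omega -> X -> int).
Hypotheses (h_random : forall i, random_hash (h i))
  (h_indep : mutually_independent Pr h).

Lemma prob_bigcap_bigcup_cyl_le (K : {set I}) M
    (s : I -> 'I_M.+1 -> seq (X * int)) :
  (Pr (\big[setI/setT]_(i in K)
         \big[setU/set0]_(z < M.+1) h i @^-1` cyl (s i z))
   <= (\prod_(i in K) \sum_(z < M.+1) fine (Pr (h i @^-1` cyl (s i z))))%:E)%E.
Proof.
(* Distribute the intersection of unions into a union, over choice functions
   f, of intersections; then apply the union bound and independence. *)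
pose G (f : {ffun I -> 'I_M.+1}) :=
  \big[setI/setT]_(i in K) h i @^-1` cyl (s i (f i)).
have mG f : measurable (G f).
  by apply: bigsetI_measurable => i _; exact: h_random.
have PrG f :
    Pr (G f) = (\prod_(i in K) fine (Pr (h i @^-1` cyl (s i (f i)))))%:E.
  exact: h_indep.
rewrite (big_distr_big ord0) [X in (_ <= X%:E)%E](big_distr_big ord0) -sumEFin.
rewrite -(eq_bigr _ (fun f _ => PrG f)) -/(G _).
set F := pffun_on _ _ _.
rewrite -!(big_enum _ _ F) -bigcup_seq fsbig_seq ?enum_uniq //.
apply: content_sub_fsum => //.
by rewrite bigcup_seq; apply: bigsetU_measurable => f _; exact: mG.
Qed.

Context {dF : measure_display} {OmegaF : measurableType dF}.
Variables (PF : probability OmegaF R) (hash : OmegaF -> X -> int)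
  (x y : X) (p0 : R).
Hypotheses (hash_random : random_hash hash)
  (h_law : forall i, same_law Pr (h i) PF hash)
  (hash_coll : (PF (coll_event hash x y) <= p0%:E)%E).

Lemma sum_prob_coll_at_le i N :
  \sum_(z < N.*2.+1) fine (Pr (coll_at (h i) x y (z%:Z - N%:Z))) <= p0.
Proof.
rewrite -lee_fin -sumEFin.
have PrE v : (fine (Pr (coll_at (h i) x y v)))%:E = PF (coll_at hash x y v).
  by rewrite fineK ?fin_num_measure //; [exact: h_law | exact: h_random].
rewrite (eq_bigr _ (fun z _ => PrE _)).
rewrite -measure_coll_upto //; apply: le_trans hash_coll.
by apply: le_measure; rewrite ?inE; [exact: measurable_coll_upto|
  exact: measurable_coll_event | exact: coll_upto_sub].
Qed.

Lemma prob_bigcap_coll_upto_le (K : {set I}) N :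
  (Pr (\big[setI/setT]_(i in K) coll_upto (h i) x y N) <= (p0 ^+ #|K|)%:E)%E.
Proof.
apply: le_trans (prob_bigcap_bigcup_cyl_le K N.*2
  (fun i z => [:: (x, z%:Z - N%:Z); (y, z%:Z - N%:Z)])) _.
rewrite lee_fin -prodr_const; apply: ler_prod => i _; apply/andP; split.
  by apply: sumr_ge0 => z _; apply: fine_ge0; exact: measure_ge0.
exact: sum_prob_coll_at_le.
Qed.

Lemma prob_bigcap_coll_le (K : {set I}) :
  (Pr (\big[setI/setT]_(i in K) coll_event (h i) x y) <= (p0 ^+ #|K|)%:E)%E.
Proof.
pose F N := \big[setI/setT]_(i in K) coll_upto (h i) x y N.
have mF N : measurable (F N).
  by apply: bigsetI_measurable => i _; exact: measurable_coll_upto.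
have F_homo : {homo F : N M / (N <= M)%N >-> (N <= M)%O}.
  move=> N M NM; apply/subsetPset => w /in_bigsetI wF.
  by apply/in_bigsetI => i iK; apply: coll_upto_homo NM _ (wF i iK).
have -> : \big[setI/setT]_(i in K) coll_event (h i) x y = \bigcup_N F N.
  apply/seteqP; split=> w.
  - move=> /in_bigsetI wE; exists (\max_(i in K) absz (h i w x)) => //.
    apply/in_bigsetI => i iK; rewrite coll_uptoE; split; first exact: wE.
    exact: (@leq_bigmax_cond _ (mem K) (fun j => absz (h j w x)) i).
  - case=> N _ /in_bigsetI wF; apply/in_bigsetI => i iK.
    exact: coll_upto_sub (wF i iK).
have mU : measurable (\bigcup_N F N) by exact: bigcup_measurable.
have cvgF := nondecreasing_cvg_mu (mu := Pr) mF mU F_homo.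
rewrite -(cvg_lim _ cvgF) //; apply: lime_le; first exact: cvgP cvgF.
by apply: nearW => N; exact: prob_bigcap_coll_upto_le.
Qed.

End Independence.

Section ParameterBounds.
Context {R : realType}.

Lemma ceil_nat_bounds (x : R) : 0 <= x -> x <= (ceil_nat x)%:R < x + 1.
Proof.
move=> x_ge0; have ceil_ge0 : 0 <= Num.ceil x by rewrite ceil_ge0 //; lra.
rewrite /ceil_nat natr_absz ger0_norm // ceil_ge /=.
by have := ceilB1_lt x; rewrite intrD /=; lra.
Qed.

Lemma ln_ratio_ge0 (a b : R) : a <= 1 -> b <= 1 -> 0 <= ln a / ln b.
Proof. by move=> a_le1 b_le1; rewrite mulr_le0 ?invr_le0 ?ln_le0. Qed.

Lemma alpha_le_rho (p0 p1 p2 : R) : p0 <= 1 -> p1 <= 1 -> p2 <= 1 ->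
  rho p1 p2 * (1 - ln p0 / ln p1) <= rho p1 p2.
Proof.
move=> p0_le1 p1_le1 p2_le1.
by rewrite mulrBr mulr1 gerBl mulr_ge0 ?ln_ratio_ge0.
Qed.

Lemma alphaE (p0 p1 p2 : R) : ln p1 != 0 -> ln p2 != 0 ->
  rho p1 p2 * (1 - ln p0 / ln p1) = rho p1 p2 - ln p0 / ln p2.
Proof. by move=> lnp1 lnp2; rewrite /rho; field; apply/andP. Qed.

Lemma rounds_le (c : R) (n : nat) : 0 <= c -> (0 < n)%N ->
  (rounds c n)%:R <= (c + 1) * (1 + ln n%:R).
Proof.
move=> c_ge0 n_gt0; have ln_ge0 : 0 <= ln (n%:R : R) by rewrite ln_ge0 // ler1n.
have /andP[_ ceil_lt] := ceil_nat_bounds _ (mulr_ge0 c_ge0 ln_ge0).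
by rewrite /rounds; nra.
Qed.

Lemma L_param_le (n : nat) (p1 p2 : R) : 0 < p1 ->
  (L_param n p1 p2)%:R <= n%:R `^ rho p1 p2 / p1 + 1.
Proof.
move=> p1_gt0; have /andP[_ /ltW //] := ceil_nat_bounds _
  (divr_ge0 (powR_ge0 n%:R (rho p1 p2)) (ltW p1_gt0)).
Qed.

Lemma expr_k_param_le (n : nat) (p0 p2 : R) :
  (0 < n)%N -> 0 < p0 <= 1 -> 0 < p2 < 1 ->
  p0 ^+ k_param n p2 <= n%:R `^ (- (ln p0 / ln p2)).
Proof.
move=> n_gt0 /andP[p0_gt0 p0_le1] /andP[p2_gt0 p2_lt1].
have ln_ge0 : 0 <= ln (n%:R : R) by rewrite ln_ge0 // ler1n.
have lnp2_lt0 : ln p2 < 0 by rewrite ln_lt0 // p2_gt0.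
have ln_inv : ln (1 / p2) = - ln p2 by rewrite div1r lnV // posrE.
have lninv_ge0 : 0 <= ln (1 / p2) by rewrite ln_inv; lra.
have /andP[k_ge _] := ceil_nat_bounds _ (divr_ge0 ln_ge0 lninv_ge0).
rewrite -ler_ln ?posrE ?exprn_gt0 ?powR_gt0 ?ltr0n //.
rewrite lnXn // ln_powR -[_ *+ _]mulr_natr.
apply: le_trans (ler_wnM2l (ln_le0 p0_le1) k_ge) _.
rewrite [leRHS](_ : _ = ln p0 * (ln n%:R / ln (1 / p2))) // ln_inv.
by field; rewrite lt_eqF.
Qed.

Lemma rounds_L_k_le (c : R) (n : nat) (p0 p1 p2 : R) :
  0 <= c -> (0 < n)%N -> 0 < p2 -> p2 < p1 -> p1 <= p0 -> p0 < 1 ->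
  (rounds c n)%:R * (L_param n p1 p2)%:R * p0 ^+ k_param n p2
  <= 2 * (c + 1) * (1 + ln n%:R) ^+ 1
       * (n%:R `^ (rho p1 p2 * (1 - ln p0 / ln p1)) / p1).
Proof.
move=> c_ge0 n_gt0 p2_gt0 p21 p10 p0_lt1.
have p1_gt0 : 0 < p1 by exact: lt_trans p21.
have p0_01 : 0 < p0 <= 1 by apply/andP; split; lra.
have p1_01 : 0 < p1 < 1 by apply/andP; split; lra.
have p1_le1 : p1 <= 1 by lra.
have p2_le1 : p2 <= 1 by lra.
have p2_01 : 0 < p2 < 1 by apply/andP; split; lra.
have n_ge1 : 1 <= n%:R :> R by rewrite ler1n.
have ln_neq0 (p : R) : 0 < p < 1 -> ln p != 0.
  by move=> p01; rewrite lt_eqF ?ln_lt0.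
set alpha := rho p1 p2 * _; set beta := - (ln p0 / ln p2).
have alpha_sum : alpha = rho p1 p2 + beta by rewrite /alpha alphaE ?ln_neq0.
have beta_le : n%:R `^ beta <= n%:R `^ alpha.
  by rewrite ler_powR // alpha_sum lerDr ln_ratio_ge0 //; case/andP: p0_01.
have alpha_le : n%:R `^ alpha <= n%:R `^ alpha / p1.
  by rewrite ler_pdivlMr // ler_piMr ?powR_ge0.
have L_k_le :
    (L_param n p1 p2)%:R * p0 ^+ k_param n p2 <= 2 * (n%:R `^ alpha / p1).
  have k_le : p0 ^+ k_param n p2 <= n%:R `^ beta by exact: expr_k_param_le.
  apply: le_trans (ler_pM _ _ (L_param_le n p1 p2 p1_gt0) k_le) _ => //.
    by rewrite exprn_ge0 // ltW; case/andP: p0_01.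
  rewrite mulrDl mul1r mulrAC -powRD ?pnatr_eq0 -?lt0n ?n_gt0 ?implybT //.
  by rewrite -alpha_sum mulr_natl mulr2n lerD2l (le_trans beta_le alpha_le).
set A := n%:R `^ alpha / p1.
rewrite -mulrA (_ : 2 * _ * _ * _ = (c + 1) * (1 + ln n%:R) * (2 * A)).
  by apply: ler_pM (rounds_le c n c_ge0 n_gt0) L_k_le => //;
    rewrite mulr_ge0 ?exprn_ge0 //; case/andP: p0_01 => /ltW.
by ring.
Qed.

End ParameterBounds.

Lemma ge0_integral_sumr {R : realType} {d : measure_display}
    {T : measurableType d} (mu : {measure set T -> \bar R})
    (A : Type) (s : seq A) (g : A -> T -> R) :
  (forall a, measurable_fun setT (g a)) -> (forall a w, 0 <= g a w) ->
  (\int[mu]_w (\sum_(a <- s) g a w)%:E = \sum_(a <- s) \int[mu]_w (g a w)%:E)%E.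
Proof.
move=> g_meas g_ge0; under eq_integral => w _ do rewrite -sumEFin.
apply: ge0_integral_sum => // a; first exact/measurable_EFinP.
by move=> w _; rewrite lee_fin.
Qed.

Section ExpectedCollisions.
Context {R : realType} {d : measure_display} {Omega : measurableType d}
  {X : choiceType} {Rn Ln k : nat}.
Variables (Pr : probability Omega R) (h : hindex Rn Ln k -> Omega -> X -> int).
Hypothesis h_random : forall i, random_hash (h i).

(* The coordinates of g_j = (f_1, ..., f_k) in round t. *)
Definition table (t : 'I_Rn) (j : 'I_Ln) : {set hindex Rn Ln k} :=
  [set (t, j, i) | i : 'I_k].

Lemma card_table t j : #|table t j| = k.
Proof. by rewrite card_imset ?card_ord // => i i' []. Qed.

Definition table_coll (t : 'I_Rn) (j : 'I_Ln) (q p : X) : set Omega :=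
  \big[setI/setT]_(i in table t j) coll_event (h i) q p.

Lemma table_collE t j q p w :
  [forall i : 'I_k, h (t, j, i) w p == h (t, j, i) w q]
  = (w \in table_coll t j q p).
Proof.
apply/forallP/idP => [wE | /set_mem /in_bigsetI wE i].
- by apply/mem_set/in_bigsetI => _ /imsetP[i _ ->]; exact/esym/eqP/wE.
- by rewrite eq_sym; apply/eqP/wE/imsetP; exists i.
Qed.

Lemma integral_collisions_le (S : {fset X}) q (b : R) :
  (forall t j p, p \in S -> (Pr (table_coll t j q p) <= b%:E)%E) ->
  (\int[Pr]_w ((collisions (fun i => h i w) S q)%:R : R)%:E
    <= ((Rn * Ln * #|` S|)%:R * b)%:E)%E.
Proof.
move=> coll_le.
pose ind t j p w : R := \1_(table_coll t j q p) w.
have mind t j p : measurable_fun setT (ind t j p).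
  apply: measurable_indic; apply: bigsetI_measurable => i _.
  exact: measurable_coll_event.
have collE w : ((collisions (fun i => h i w) S q)%:R : R)
    = \sum_(t < Rn) \sum_(j < Ln) \sum_(p <- S) ind t j p w.
  rewrite /collisions natr_sum; apply: eq_bigr => t _.
  rewrite natr_sum; apply: eq_bigr => j _.
  rewrite natr_sum; apply: eq_bigr => p _.
  by rewrite table_collE /ind indicE.
under eq_integral => w _ do rewrite collE.
have ind_ge0 t j p w : 0 <= ind t j p w by rewrite /ind indicE.
rewrite ge0_integral_sumr; first last.
- by move=> t w; do 2!apply: sumr_ge0 => ? _.
- by move=> t; apply: measurable_sum => j; exact: measurable_sum.
apply: (@le_trans _ _ (\sum_(t < Rn) \sum_(j < Ln) \sum_(p <- S) b%:E)%E).
  apply: lee_sum => t _; rewrite ge0_integral_sumr; first last.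
  - by move=> j w; exact: sumr_ge0.
  - by move=> j; exact: measurable_sum.
  apply: lee_sum => j _; rewrite ge0_integral_sumr // big_seq [leRHS]big_seq.
  apply: lee_sum => p pS.
  rewrite integral_indic ?setIT //; first exact: coll_le.
  by apply: bigsetI_measurable => i _; exact: measurable_coll_event.
rewrite !sumEFin lee_fin !big_const_ord big_const_seq count_predT !iter_addr_0.
by rewrite -!mulrnA mulr_natl mulnC (mulnC Ln).
Qed.

End ExpectedCollisions.

Theorem lemma3 (R : realType) (c : R) (hc : 0 < c) :
  exists (C : R) (e : nat), 0 < C /\
  forall (X : choiceType) (dist : X -> X -> R) (P : {fset X})
    (r eps r0 p0 p1 p2 : R)
    (dF : measure_display) (OmegaF : measurableType dF)
    (PF : probability OmegaF R) (hash : OmegaF -> X -> int)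
    (q : X)
    (d : measure_display) (Omega : measurableType d)
    (Pr : probability Omega R)
    (h : hindex (rounds c #|` P|%fset) (L_param #|` P|%fset p1 p2)
                (k_param #|` P|%fset p2) -> Omega -> X -> int),
    is_metric dist -> 0 < r -> 0 < eps ->
    random_hash hash ->
    sensitive dist PF hash r0 r (r * (1 + eps)) p0 p1 p2 ->
    (forall i, random_hash (h i)) ->
    (forall i, same_law Pr (h i) PF hash) ->
    mutually_independent Pr h ->
    let n := #|` P|%fset in
    let S := annulus dist P q r0 (r * (1 + eps)) in
    let alpha := rho p1 p2 * (1 - ln p0 / ln p1) in
    alpha <= rho p1 p2 /\
    (\int[Pr]_w ((collisions (fun i => h i w) S q)%:R : R)%:E
      <= (C * (1 + ln (n%:R : R)) ^+ e
            * ((n%:R : R) `^ alpha / p1) * (#|` S|%fset)%:R)%:E)%E.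
Proof.
exists (2 * (c + 1)), 1%N; split; first lra.
move=> X dist P r eps r0 p0 p1 p2 dF OmegaF PF hash q d Omega Pr h _ _ _
  hash_random [_ [p0_lt1 [p10 [p21 p2_gt0]]] _ _ far_coll]
  h_random h_law h_indep n S alpha.
split; first by apply: alpha_le_rho; lra.
have table_coll_le t j p : p \in S ->
    (Pr (table_coll h t j q p) <= (p0 ^+ k_param n p2)%:E)%E.
  rewrite !inE => /and3P[_ _ /andP[_]]; rewrite -ltNge => /ltW r0_le.
  rewrite -[X in p0 ^+ X](card_table t j).
  exact: (prob_bigcap_coll_le _ _ h_random h_indep PF hash q p p0
    hash_random h_law (far_coll _ _ r0_le)).
apply: le_trans (integral_collisions_le _ _ h_random _ _ _ table_coll_le) _.
rewrite lee_fin.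
have [S0 | S_gt0] := posnP #|` S|; first by rewrite S0 !(muln0, mulr0, mul0r).
have n_gt0 : (0 < n)%N.
  by apply: leq_trans S_gt0 _; apply/fsubset_leq_card/fset_sub.
rewrite natrM mulrAC ler_wpM2r // natrM.
by apply: rounds_L_k_le; rewrite // ltW.
Qed.
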